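(* In the setting described in the context, let $q\in\{1,\dots,n\}$. The following are equivalent: (1) there exists a $q$-minitive capacity $\mu:2^{\mathcal C}\to L$ with $S_\mu(x^{(k)})=\alpha^{(k)}$ for all $k\in\{1,\dots,N\}$; (2) the reduced min–max system $(\Sigma_q)$ is consistent and there exists $A\subsetneq\mathcal C$ with $|A|=n-q$ and $f_q(A)=0$.
   Context: Let $\mathcal C=\{1,\dots,n\}$ and let $L$ be either a finite totally ordered set $0=\xi_1<\dots<\xi_l=1$ or $L=[0,1]$. A capacity is a map $\mu:2^{\mathcal C}\to L$ with $\mu(\emptyset)=0$, $\mu(\mathcal C)=1$, monotone for inclusion; it is $q$-minitive if for all $X$ with $|X|<n-q$, $\mu(X)=\min_{Y\supsetneq X,\ |Y|\ge n-q}\mu(Y)$. Sugeno integral: $S_\mu(x)=\max_{A\subseteq\mathcal C}\min(\min_{i\in A}x_i,\mu(A))$ with $\min_{i\in\emptyset}x_i=1$. Training data: $N$ pairs $(x^{(k)},\alpha^{(k)})$, $x^{(k)}\in L^n$, $\alpha^{(k)}\in L$. For $A\subsetneq\mathcal C$, $\gamma_{k,A}=\max_{i\in\mathcal C\setminus A}x^{(k)}_i$. The reduced system $(\Sigma_q)$ has unknowns $\xi_A\in L$ for $A\subsetneq\mathcal C$ with $|A|\ge n-q$ and equations $\min_{A\subsetneq\mathcal C,\ |A|\ge n-q}\max(\gamma_{k,A},\xi_A)=\alpha^{(k)}$, $k=1,\dots,N$; it is consistent if it has a solution in $L$. For such $A$, $f_q(A)=\max_{1\le k\le N}(\gamma_{k,A}\,\epsilon\,\alpha^{(k)})$,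 where $a\,\epsilon\,b=b$ if $a<b$ and $0$ if $a\ge b$. *)

From HB Require Import structures.
From mathcomp Require Import all_boot all_order all_algebra.
From mathcomp Require Import reals.
Set Implicit Arguments.
Unset Strict Implicit.
Unset Printing Implicit Defensive.
Import Order.TTheory GRing.Theory Num.Theory.
Local Open Scope ring_scope.

(* The value scale L is represented as a predicate on the reals:
   either L = [0,1], or L is a finite chain 0 = xi_1 < ... < xi_l = 1
   (any finite totally ordered set embeds order-isomorphically in [0,1]). *)
Definition scale_ok (R : realType) (L : pred R) : Prop :=
  (forall x, L x <-> (0 <= x <= 1)) \/
  ((exists s : seq R, forall x, L x <-> x \in s) /\ L 0 /\ L 1 /\
   (forall x, L x -> 0 <= x <= 1)).

Section Defs.
Variables (R : realType) (L : pred R) (n : nat).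

Definition capacity (mu : {set 'I_n} -> R) : Prop :=
  [/\ forall A, L (mu A), mu set0 = 0, mu setT = 1 &
      forall A B : {set 'I_n}, A \subset B -> mu A <= mu B].

Definition q_minitive (q : nat) (mu : {set 'I_n} -> R) : Prop :=
  forall X : {set 'I_n}, (#|X| < n - q)%N ->
    mu X = \big[Num.min/1]_(Y : {set 'I_n} | (X \proper Y) && (n - q <= #|Y|)%N) mu Y.

(* Sugeno integral; the empty minimum is 1 *)
Definition sugeno (mu : {set 'I_n} -> R) (x : 'I_n -> R) : R :=
  \big[Num.max/0]_(A : {set 'I_n}) Num.min (\big[Num.min/1]_(i in A) x i) (mu A).

(* gamma_{k,A} = max_{i notin A} x_i (A proper, so the range is nonempty) *)
Definition gamma (x : 'I_n -> R) (A : {set 'I_n}) : R :=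
  \big[Num.max/0]_(i in ~: A) x i.

Definition eps (a b : R) : R := if a < b then b else 0.

Section Data.
Variables (N : nat) (x : 'I_N -> 'I_n -> R) (alpha : 'I_N -> R) (q : nat).

Definition reduced_var (A : {set 'I_n}) : bool :=
  (A \proper setT) && (n - q <= #|A|)%N.

Definition reduced_consistent : Prop :=
  exists xi : {set 'I_n} -> R,
    (forall A, reduced_var A -> L (xi A)) /\
    forall k : 'I_N,
      \big[Num.min/1]_(A : {set 'I_n} | reduced_var A)
         Num.max (gamma (x k) A) (xi A) = alpha k.

Definition f_q (A : {set 'I_n}) : R :=
  \big[Num.max/0]_(k : 'I_N) eps (gamma (x k) A) (alpha k).

End Data.
End Defs.

From HB Require Import structures.
From mathcomp Require Import all_boot all_order all_algebra.
From mathcomp Require Import reals.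
Import Order.TTheory GRing.Theory Num.Theory.
Local Open Scope ring_scope.
Set Implicit Arguments.
Unset Strict Implicit.
Unset Printing Implicit Defensive.

(* For a monotone mu with mu(C) = 1 the Sugeno integral has the dual min-max
   form S_mu(x) = min_A max(gamma_A(x), mu(A)), and q-minitivity lets the
   minimum range over the sets of size >= n - q only: mu itself then solves
   (Sigma_q).  Since eps(a, b) <= c iff b <= max(a, c), the function f_q is the
   least nonnegative solution of (Sigma_q) whenever (Sigma_q) is consistent;
   hence f_q <= mu, and mu(emptyset) = 0 forces mu, thus f_q, to vanish on
   some set of size n - q.  Conversely, f_q is monotone, and its q-minitive
   extension to the small sets (with the value 1 on C) is a capacity solving
   the problem; it vanishes on the empty set because f_q vanishes on a set of
   size n - q. *)

Lemma exists_subset_card (T : finType) (B : {set T}) k :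
  (k <= #|B|)%N -> exists2 A : {set T}, A \subset B & #|A| = k.
Proof.
rewrite -bin_gt0 -cards_draws card_gt0 => /set0Pn[A].
by rewrite inE => /andP[sAB /eqP cardA]; exists A.
Qed.

Section ClosedUnderMinMax.
Variables (d : Order.disp_t) (T : orderType d) (P : pred T).

Lemma min_closed a b : P a -> P b -> P (Order.min a b).
Proof. by rewrite minEle; case: ifP. Qed.

Lemma max_closed a b : P a -> P b -> P (Order.max a b).
Proof. by rewrite maxEle; case: ifP. Qed.

End ClosedUnderMinMax.

Lemma scale_ok_bounds (R : realType) (L : pred R) :
  scale_ok L -> [/\ L 0, L 1 & forall z, L z -> 0 <= z <= 1].
Proof.
case=> [Lint | [_ [L0 [L1 Lbound]]]]; last by [].
by split=> [||z /Lint //]; apply/Lint; rewrite lexx ler01.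
Qed.

Section SugenoDual.
Variables (R : realType) (n : nat).
Implicit Types (mu : {set 'I_n} -> R) (y : 'I_n -> R) (A B : {set 'I_n}).

Definition sugeno_dual mu y :=
  \big[Num.min/1]_(A : {set 'I_n}) Num.max (gamma y A) (mu A).

Definition sugeno_reduced q mu y :=
  \big[Num.min/1]_(A : {set 'I_n} | reduced_var q A) Num.max (gamma y A) (mu A).

Lemma gamma_ge0 y A : 0 <= gamma y A.
Proof. exact: bigmax_ge_id. Qed.

Lemma gammaS y A B : A \subset B -> gamma y B <= gamma y A.
Proof.
move=> sAB; apply: bigmax_le => [|i]; first exact: gamma_ge0.
rewrite !inE => iB; apply: le_bigmax_cond.
by rewrite inE; apply: contra iB; apply: (subsetP sAB).
Qed.

Lemma sugeno_dualE mu y :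
  {homo mu : A B / A \subset B >-> A <= B} -> mu setT = 1 ->
  sugeno mu y = sugeno_dual mu y.
Proof.
move=> muS mu1; have mu_le1 B : mu B <= 1 by rewrite -mu1 muS ?subsetT.
apply/le_anti/andP; split.
  apply: bigmax_le => [|B _].
    by apply: le_bigmin => // A _; rewrite le_max gamma_ge0.
  apply: le_bigmin => [|A _]; first by rewrite ge_min mu_le1 orbT.
  have [sBA | /subsetPn[i iB iNA]] := boolP (B \subset A).
    by rewrite ge_min !le_max (muS _ _ sBA) !orbT.
  rewrite ge_min le_max (bigmin_inf i) //.
  by apply: le_bigmax_cond; rewrite inE.
(* The level set of [y] strictly above [t := sugeno mu y] attains the bound. *)
set t := sugeno mu y; pose A := [set i | t < y i].
have gammaA : gamma y A <= t.
  by apply: bigmax_le => [|i]; [exact: bigmax_ge_id | rewrite !inE -leNgt].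
have termA : Num.min (\big[Num.min/1]_(i in A) y i) (mu A) <= t.
  exact: (le_bigmax _ (fun B => Num.min (\big[Num.min/1]_(i in B) y i) (mu B))).
have muA : mu A <= t.
  rewrite leNgt; apply: contraTN termA => lt_t_muA.
  rewrite -ltNge lt_min lt_t_muA andbT; apply/bigmin_gtP.
  by split=> [|i]; [exact: lt_le_trans lt_t_muA (mu_le1 A) | rewrite inE].
by apply: (bigmin_inf A) => //; rewrite ge_max gammaA muA.
Qed.

Lemma sugeno_dual_reduced q mu y :
  q_minitive q mu -> mu setT = 1 -> sugeno_dual mu y = sugeno_reduced q mu y.
Proof.
move=> mu_min mu1; apply/le_anti/andP; split.
  by apply: le_bigmin => [|A _]; [exact: bigmin_le_id | exact: bigmin_le].
have red_le1 : sugeno_reduced q mu y <= 1 by exact: bigmin_le_id.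
apply: le_bigmin => // A _.
have [/eqP-> | AnT] := boolP (A == setT); first by rewrite le_max mu1 red_le1 orbT.
have [bigA | smallA] := boolP (n - q <= #|A|)%N.
  by apply: bigmin_le_cond; rewrite /reduced_var properT AnT bigA.
(* A small set: q-minitivity makes [mu A] a minimum over reduced supersets [Y],
   whose [gamma] is smaller by [gammaS]. *)
rewrite (mu_min A) ?ltnNge // le_max.
have [//|/= gamma_lt] := leP (sugeno_reduced q mu y) (gamma y A).
apply: le_bigmin => // Y /andP[pAY bigY].
have [/eqP-> | YnT] := boolP (Y == setT); first by rewrite mu1.
have : sugeno_reduced q mu y <= Num.max (gamma y Y) (mu Y).
  by apply: bigmin_le_cond; rewrite /reduced_var properT YnT bigY.
rewrite le_max => /orP[le_gammaY|//].
have := le_trans le_gammaY (gammaS y (proper_sub pAY)).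
by rewrite leNgt gamma_lt.
Qed.

Lemma le_sugeno_reduced q mu nu y :
  (forall A, reduced_var q A -> mu A <= nu A) ->
  sugeno_reduced q mu y <= sugeno_reduced q nu y.
Proof. by move=> le_mu_nu; apply: le_bigmin2 => A /le_mu_nu; apply: le_max2. Qed.

Lemma q_minitive_zero_set q mu :
  {homo mu : A B / A \subset B >-> A <= B} -> (forall A, 0 <= mu A) ->
  mu set0 = 0 -> q_minitive q mu ->
  exists A, #|A| = (n - q)%N /\ mu A = 0.
Proof.
move=> muS mu_ge0 mu0 mu_min.
have [Y bigY muY] : exists2 Y : {set 'I_n}, (n - q <= #|Y|)%N & mu Y = 0.
  have [|nq_gt0] := leqP (n - q) 0%N; first by exists set0; rewrite ?cards0.
  pose P (Y : {set 'I_n}) := (set0 \proper Y) && (n - q <= #|Y|)%N.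
  have [Y /andP[/andP[_ bigY] /eqP muY] | mu_pos] := pickP (fun Y => P Y && (mu Y == 0)).
    by exists Y.
  have : 0 < \big[Num.min/1]_(Y | P Y) mu Y.
    apply/bigmin_gtP; split=> [|Y PY]; first exact: ltr01.
    by rewrite lt0r mu_ge0 andbT; have := mu_pos Y; rewrite PY => /negbT.
  by rewrite -(mu_min set0) ?cards0 // mu0 ltxx.
have [A sAY cardA] := exists_subset_card bigY.
by exists A; split=> //; apply/le_anti; rewrite mu_ge0 andbT -muY muS.
Qed.

End SugenoDual.

Section LeastSolution.
Variables (R : realType) (n N q : nat).
Variables (x : 'I_N -> 'I_n -> R) (alpha : 'I_N -> R).
Implicit Types (xi : {set 'I_n} -> R) (A B : {set 'I_n}).

Definition solves_reduced xi := forall k, sugeno_reduced q xi (x k) = alpha k.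

Lemma eps_le_max (a b c : R) : 0 <= c -> (eps a b <= c) = (b <= Num.max a c).
Proof. by rewrite /eps le_max => c_ge0; case: ltP; rewrite ?c_ge0. Qed.

Lemma f_q_ge0 A : 0 <= f_q x alpha A.
Proof. exact: bigmax_ge_id. Qed.

Lemma f_q_leP A c : 0 <= c ->
  reflect (forall k, alpha k <= Num.max (gamma (x k) A) c) (f_q x alpha A <= c).
Proof.
move=> c_ge0; apply: (iffP idP) => [fAc k | le_alpha].
  by rewrite -eps_le_max //; apply: le_trans fAc; apply: le_bigmax.
by apply: bigmax_le => // k _; rewrite eps_le_max.
Qed.

Lemma le_max_f_q k A : alpha k <= Num.max (gamma (x k) A) (f_q x alpha A).
Proof. by move: k; apply/f_q_leP; rewrite ?f_q_ge0. Qed.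

Lemma f_qS A B : A \subset B -> f_q x alpha A <= f_q x alpha B.
Proof.
move=> sAB; apply/f_q_leP; rewrite ?f_q_ge0 // => k.
by apply: le_trans (le_max_f_q k B) _; rewrite le_max2 ?gammaS.
Qed.

Lemma f_q_in (L : pred R) :
  L 0 -> (forall k, L (alpha k)) -> forall A, L (f_q x alpha A).
Proof.
move=> L0 alpha_in A; apply: (big_ind L) => // [a b|k _]; first exact: max_closed.
by rewrite /eps; case: ifP.
Qed.

Lemma f_q_le_solution xi A :
  solves_reduced xi -> reduced_var q A -> 0 <= xi A -> f_q x alpha A <= xi A.
Proof.
move=> xi_sol redA xiA_ge0; apply/f_q_leP => // k.
by rewrite -xi_sol; apply: bigmin_le_cond.
Qed.

Lemma f_q_solves xi : (forall A, reduced_var q A -> 0 <= xi A) ->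
  solves_reduced xi -> solves_reduced (f_q x alpha).
Proof.
move=> xi_ge0 xi_sol k; apply/le_anti/andP; split.
  rewrite -xi_sol; apply: le_sugeno_reduced => A redA.
  exact: f_q_le_solution (xi_ge0 A redA).
apply: le_bigmin => [|A _]; last exact: le_max_f_q.
by rewrite -xi_sol; apply: bigmin_le_id.
Qed.

End LeastSolution.

Section WithTop.
Variables (R : realType) (n : nat) (g : {set 'I_n} -> R).
Implicit Types A B : {set 'I_n}.

Definition with_top A := if A == setT then 1 else g A.

Lemma with_topS :
  {homo g : A B / A \subset B >-> A <= B} -> (forall A, g A <= 1) ->
  {homo with_top : A B / A \subset B >-> A <= B}.
Proof.
move=> gS g_le1 A B sAB /=; rewrite /with_top.
have [_ | BnT] := ifPn (B == setT); first by case: ifP => _; rewrite ?g_le1.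
have AnT : A != setT by apply: contraNneq BnT => eA; rewrite eqEsubset subsetT -eA.
by rewrite (negbTE AnT) gS.
Qed.

End WithTop.

Section MinitiveExtension.
Variables (R : realType) (n q : nat) (g : {set 'I_n} -> R).
Implicit Types A B : {set 'I_n}.

Definition minitive_ext A :=
  if (n - q <= #|A|)%N then g A
  else \big[Num.min/1]_(Y : {set 'I_n} | (A \proper Y) && (n - q <= #|Y|)%N) g Y.

Lemma minitive_ext_big A : (n - q <= #|A|)%N -> minitive_ext A = g A.
Proof. by rewrite /minitive_ext => ->. Qed.

Lemma q_minitive_ext : q_minitive q minitive_ext.
Proof.
move=> A smallA; rewrite /minitive_ext leqNgt smallA /=.
by apply: eq_bigr => Y /andP[_ bigY]; rewrite bigY.
Qed.

Lemma minitive_extS :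
  {homo g : A B / A \subset B >-> A <= B} ->
  {homo minitive_ext : A B / A \subset B >-> A <= B}.
Proof.
move=> gS A B sAB; rewrite /minitive_ext.
have [bigA | smallA] := ifPn; have [bigB | smallB] := ifPn.
- exact: gS.
- by move: smallB; rewrite (leq_trans bigA (subset_leq_card sAB)).
- apply: (bigmin_inf B) => //; rewrite properEcard sAB bigB andbT.
  by apply: leq_trans bigB; rewrite ltnNge.
- apply: le_bigmin => [|Y /andP[pBY bigY]]; first exact: bigmin_le_id.
  by apply: (bigmin_inf Y) => //; rewrite (sub_proper_trans sAB) ?bigY.
Qed.

Lemma minitive_ext_in (L : pred R) :
  L 1 -> (forall A, L (g A)) -> forall A, L (minitive_ext A).
Proof.
move=> L1 gL A; rewrite /minitive_ext; case: ifP => _ //.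
by apply: (big_ind L) => //; apply: min_closed.
Qed.

End MinitiveExtension.

Section Characterization.
Variables (R : realType) (L : pred R) (n N q : nat).
Variables (x : 'I_N -> 'I_n -> R) (alpha : 'I_N -> R).
Hypotheses (L0 : L 0) (L1 : L 1) (Lbound : forall z, L z -> 0 <= z <= 1).
Hypothesis alpha_in : forall k, L (alpha k).

Let L_ge0 z : L z -> 0 <= z.
Proof. by move/Lbound/andP=> []. Qed.

Lemma sugeno_solution_reduced (mu : {set 'I_n} -> R) :
  (0 < q <= n)%N -> capacity L mu -> q_minitive q mu ->
  (forall k, sugeno mu (x k) = alpha k) ->
  reduced_consistent L x alpha q /\
  exists A : {set 'I_n}, [/\ A \proper setT, #|A| = (n - q)%N & f_q x alpha A = 0].
Proof.
case/andP=> q_gt0 q_le_n [mu_in mu0 mu1 muS] mu_min mu_sol.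
have mu_solves : solves_reduced q x alpha mu.
  by move=> k; rewrite -mu_sol sugeno_dualE // (sugeno_dual_reduced _ mu_min).
have [A [cardA muA]] := q_minitive_zero_set muS (fun A => L_ge0 (mu_in A)) mu0 mu_min.
have A_proper : A \proper setT.
  by rewrite properEcard subsetT cardA cardsT card_ord ltn_subrL q_gt0 (leq_trans q_gt0).
split; first by exists mu.
exists A; split=> //; apply/le_anti; rewrite f_q_ge0 andbT -muA.
by apply: (f_q_le_solution mu_solves); rewrite ?muA // /reduced_var cardA leqnn andbT.
Qed.

Lemma reduced_solution_sugeno (A0 : {set 'I_n}) :
  reduced_consistent L x alpha q ->
  A0 \proper setT -> #|A0| = (n - q)%N -> f_q x alpha A0 = 0 ->
  exists mu : {set 'I_n} -> R,
    [/\ capacity L mu, q_minitive q mu & forall k, sugeno mu (x k) = alpha k].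
Proof.
move=> [xi [xi_in xi_solves]] A0_proper cardA0 fA0.
have f_solves := f_q_solves (fun A redA => L_ge0 (xi_in A redA)) xi_solves.
have f_in := f_q_in x L0 alpha_in.
pose mu := minitive_ext q (with_top (f_q x alpha)).
have mu_in A : L (mu A).
  by apply: minitive_ext_in => // B; rewrite /with_top; case: ifP.
have mu_min : q_minitive q mu by apply: q_minitive_ext.
have muS : {homo mu : A B / A \subset B >-> A <= B}.
  by apply/minitive_extS/with_topS => [A B|A]; [apply: f_qS | case/andP: (Lbound (f_in A))].
have mu_f (A : {set 'I_n}) : A \proper setT -> (n - q <= #|A|)%N -> mu A = f_q x alpha A.
  by rewrite properT => AnT bigA; rewrite /mu minitive_ext_big // /with_top (negbTE AnT).
have mu1 : mu setT = 1.
  by rewrite /mu minitive_ext_big ?cardsT ?card_ord ?leq_subr // /with_top eqxx.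
have mu0 : mu set0 = 0.
  by apply/le_anti; rewrite L_ge0 // andbT -fA0 -mu_f ?cardA0 // muS ?sub0set.
exists mu; split=> // k.
rewrite sugeno_dualE // (sugeno_dual_reduced _ mu_min) // -f_solves.
by apply: eq_bigr => A /andP[A_proper bigA]; rewrite mu_f.
Qed.

End Characterization.

Theorem theorem3 (R : realType) (L : pred R) (n N q : nat)
    (x : 'I_N -> 'I_n -> R) (alpha : 'I_N -> R) :
  scale_ok L ->
  (forall k i, L (x k i)) ->
  (forall k, L (alpha k)) ->
  (1 <= q <= n)%N ->
  (exists mu : {set 'I_n} -> R,
      [/\ capacity L mu, q_minitive q mu &
          forall k : 'I_N, sugeno mu (x k) = alpha k])
  <->
  (reduced_consistent L x alpha q /\
   exists A : {set 'I_n},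
     [/\ A \proper setT, #|A| = (n - q)%N & f_q x alpha A = 0]).
Proof.
move=> Lscale _ alpha_in q_range.
have [L0 L1 Lbound] := scale_ok_bounds Lscale.
split=> [[mu [mu_cap mu_min mu_sol]] | [solvable [A0 [A0_proper cardA0 fA0]]]].
  exact: (sugeno_solution_reduced Lbound q_range mu_cap mu_min mu_sol).
exact: (reduced_solution_sugeno L0 L1 Lbound alpha_in solvable A0_proper cardA0 fA0).
Qed.
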